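(* $|\mathrm{GHZ}\rangle^{\otimes 17}\stackrel{\textrm{SLOCC}}{\longrightarrow}|\Phi^3\rangle^{\otimes 6}$.
   Context: Three parties $A,B,C$. $|\mathrm{GHZ}\rangle=\frac{1}{\sqrt2}(|000\rangle+|111\rangle)$ with one qubit held by each of $A,B,C$. Let $|\Phi\rangle=|00\rangle+|11\rangle$ (unnormalized EPR state). $|\Phi^3\rangle=|\Phi\rangle_{AB}|\Phi\rangle_{AC}|\Phi\rangle_{BC}$ is the (unnormalized) state in which each pair of parties shares one EPR state, so each party holds two qubits. Tensor powers are taken with each party holding its own parts of all copies. $|\psi\rangle\stackrel{\textrm{SLOCC}}{\longrightarrow}|\phi\rangle$ means $|\psi\rangle$ can be transformed into $|\phi\rangle$ with nonzero probability by local operations and classical communication; equivalently, there exist linear operators $A,B,C$ on the respective parties' spaces with $(A\otimes B\otimes C)|\psi\rangle=|\phi\rangle$ up to a nonzero scalar. *)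

From mathcomp Require Import all_boot all_algebra.
Set Implicit Arguments. Unset Strict Implicit. Unset Printing Implicit Defensive.
Import GRing.Theory Num.Theory.
Local Open Scope ring_scope.

(* A (possibly unnormalized) tripartite state: party A has basis indexed by I,
   party B by J, party C by K; the state is its coefficient function. *)
Definition state3 (C : numClosedFieldType) (I J K : finType) := I -> J -> K -> C.

(* Tensor power: each party holds its own parts of all n copies. *)
Definition tpow3 (C : numClosedFieldType) (I J K : finType) (s : state3 C I J K)
  (n : nat) : state3 C {ffun 'I_n -> I} {ffun 'I_n -> J} {ffun 'I_n -> K} :=
  fun f g h => \prod_(k < n) s (f k) (g k) (h k).

Arguments tpow3 {C I J K} s n _ _ _.

Definition apply3 (C : numClosedFieldType) (I J K I' J' K' : finType)
  (A : I' -> I -> C) (B : J' -> J -> C) (Cm : K' -> K -> C)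
  (s : state3 C I J K) : state3 C I' J' K' :=
  fun i' j' k' => \sum_(i : I) \sum_(j : J) \sum_(k : K)
     A i' i * B j' j * Cm k' k * s i j k.

Definition slocc (C : numClosedFieldType) (I J K I' J' K' : finType)
  (psi : state3 C I J K) (phi : state3 C I' J' K') : Prop :=
  exists (A : I' -> I -> C) (B : J' -> J -> C) (Cm : K' -> K -> C) (c : C),
    c != 0 /\ apply3 A B Cm psi = (fun i' j' k' => c * phi i' j' k').

Definition GHZ (C : numClosedFieldType) : state3 C bool bool bool :=
  fun a b c => if (a == b) && (b == c) then (sqrtC (2 : C))^-1 else 0.

Definition Phi (C : numClosedFieldType) : bool -> bool -> C := fun x y =>
  if x == y then 1 else 0.

(* |Phi^3> = |Phi>_AB |Phi>_AC |Phi>_BC.  Party A holds (qubit of AB, qubit of AC),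
   party B holds (qubit of AB, qubit of BC), party C holds (qubit of AC, qubit of BC). *)
Definition Phi3 (C : numClosedFieldType) : state3 C (bool * bool)%type (bool * bool)%type (bool * bool)%type :=
  fun a b c => Phi C a.1 b.1 * Phi C a.2 c.1 * Phi C b.2 c.2.

(* GHZ^(x)17 is a multiple of the unit tensor of size 2^17, and a unit tensor of size m
   restricts under SLOCC to every tensor of tensor rank at most m.  Phi^3 is the 2x2
   matrix multiplication tensor, which has rank 7 by Strassen's algorithm; since rank is
   submultiplicative under tensor powers, (Phi^3)^(x)6 has rank at most 7^6 <= 2^17. *)
From mathcomp Require Import all_boot all_algebra.
From mathcomp Require Import ring.
From Stdlib Require Import FunctionalExtensionality.
Set Implicit Arguments. Unset Strict Implicit. Unset Printing Implicit Defensive.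
Import GRing.Theory Num.Theory.
Local Open Scope ring_scope.

Section RankDecompositions.

Variable C : numClosedFieldType.

Definition diag3 (T : finType) (d : C) : state3 C T T T :=
  fun i j k => if (i == j) && (j == k) then d else 0.

Definition triad_sum (R I J K : finType)
    (a : R -> I -> C) (b : R -> J -> C) (c : R -> K -> C) : state3 C I J K :=
  fun i j k => \sum_r a r i * b r j * c r k.

Lemma tpow3_diag3 (T : finType) (d : C) n :
  tpow3 (diag3 (T:=T) d) n = diag3 (T:={ffun 'I_n -> T}) (d ^+ n).
Proof.
apply: functional_extensionality => f; apply: functional_extensionality => g.
apply: functional_extensionality => h; rewrite /tpow3 /diag3.
have [/forallP fgh | /forallPn [k fghk]] :=
  boolP [forall k, (f k == g k) && (g k == h k)].
  have -> : f = g by apply/ffunP => k; case/andP: (fgh k) => /eqP.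
  have -> : g = h by apply/ffunP => k; case/andP: (fgh k) => _ /eqP.
  rewrite !eqxx (eq_bigr (fun _ => d)) ?prodr_const ?card_ord // => k _.
  by rewrite !eqxx.
rewrite (bigD1 k) //= (negbTE fghk) mul0r.
by case: ifP => // /andP[/eqP fg /eqP gh]; move: fghk; rewrite fg gh !eqxx.
Qed.

Lemma tpow3_triad_sum (R I J K : finType)
    (a : R -> I -> C) (b : R -> J -> C) (c : R -> K -> C) n :
  tpow3 (triad_sum a b c) n =
  triad_sum (fun (g : {ffun 'I_n -> R}) (f : {ffun 'I_n -> I}) => \prod_k a (g k) (f k))
            (fun g (f : {ffun 'I_n -> J}) => \prod_k b (g k) (f k))
            (fun g (f : {ffun 'I_n -> K}) => \prod_k c (g k) (f k)).
Proof.
apply: functional_extensionality => f; apply: functional_extensionality => g.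
apply: functional_extensionality => h; rewrite /tpow3 /triad_sum.
rewrite (bigA_distr_bigA (fun k r => a r (f k) * b r (g k) * c r (h k))).
by apply: eq_bigr => r _; rewrite -!big_split.
Qed.

Lemma sum_diag3 (T : finType) (X : T -> T -> T -> C) d :
  \sum_i \sum_j \sum_k X i j k * diag3 d i j k = \sum_i X i i i * d.
Proof.
apply: eq_bigr => i _; rewrite /diag3 (bigD1 i) //= [X in _ + X]big1 => [|j ji].
  rewrite addr0 (bigD1 i) //= [X in _ + X]big1 => [|k ki].
    by rewrite !eqxx addr0.
  by rewrite eqxx eq_sym (negbTE ki) mulr0.
by rewrite big1 // => k _; rewrite eq_sym (negbTE ji) mulr0.
Qed.

Lemma mul_fiber_sums (R T : finType) (e : R -> T) (x y z : R -> C) t :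
  injective e ->
  (\sum_(r | e r == t) x r) * (\sum_(r | e r == t) y r) * (\sum_(r | e r == t) z r) =
  \sum_(r | e r == t) x r * y r * z r.
Proof.
move=> e_inj; have [r0 /eqP er0 | no_fiber] := pickP (fun r => e r == t).
  have fiber1 r : (e r == t) = (r == r0) by rewrite -er0 (inj_eq e_inj).
  by rewrite !(big_pred1 r0).
by rewrite !big_pred0 ?mul0r.
Qed.

Lemma slocc_diag3_triad_sum (T R I J K : finType) (d : C)
    (a : R -> I -> C) (b : R -> J -> C) (c : R -> K -> C) :
  d != 0 -> (#|R| <= #|T|)%N -> slocc (diag3 (T:=T) d) (triad_sum a b c).
Proof.
move=> d_neq0 le_RT.
pose e (r : R) : T := enum_val (widen_ord le_RT (enum_rank r)).
have e_inj : injective e.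
  move=> r1 r2 /enum_val_inj/(congr1 val) eq_r.
  by apply/enum_rank_inj/val_inj.
exists (fun i t => \sum_(r | e r == t) a r i), (fun j t => \sum_(r | e r == t) b r j).
exists (fun k t => \sum_(r | e r == t) c r k), d; split => //.
apply: functional_extensionality => i; apply: functional_extensionality => j.
apply: functional_extensionality => k; rewrite /apply3 sum_diag3 -mulr_suml mulrC.
congr (_ * _); under eq_bigr do rewrite mul_fiber_sums //.
by rewrite /triad_sum [RHS](partition_big e xpredT).
Qed.

End RankDecompositions.

(* Strassen's seven products: Phi3 is the 2x2 matrix multiplication tensor. *)
Definition strassenA (C : numClosedFieldType) (r : 'I_7) (a : bool * bool) : C :=
  match a, val r with
  | (false, false), (0 | 2 | 4)%N => 1
  | (false, false), 5%N => -1
  | (false, true), (1 | 5)%N => 1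
  | (true, false), (4 | 6)%N => 1
  | (true, true), (0 | 1 | 3)%N => 1
  | (true, true), 6%N => -1
  | _, _ => 0
  end.

Definition strassenB (C : numClosedFieldType) (r : 'I_7) (b : bool * bool) : C :=
  match b, val r with
  | (false, false), (0 | 1 | 5)%N => 1
  | (false, false), 3%N => -1
  | (false, true), (2 | 5)%N => 1
  | (true, false), (3 | 6)%N => 1
  | (true, true), (0 | 4 | 6)%N => 1
  | (true, true), 2%N => -1
  | _, _ => 0
  end.

Definition strassenC (C : numClosedFieldType) (r : 'I_7) (c : bool * bool) : C :=
  match c, val r with
  | (false, false), (0 | 3 | 6)%N => 1
  | (false, false), 4%N => -1
  | (false, true), (2 | 4)%N => 1
  | (true, false), (1 | 3)%N => 1
  | (true, true), (0 | 2 | 5)%N => 1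
  | (true, true), 1%N => -1
  | _, _ => 0
  end.

Lemma Phi3_strassen (C : numClosedFieldType) :
  Phi3 C = triad_sum (@strassenA C) (@strassenB C) (@strassenC C).
Proof.
apply: functional_extensionality => a; apply: functional_extensionality => b.
apply: functional_extensionality => c; rewrite /triad_sum !big_ord_recr big_ord0 /=.
by case: a => [[] []]; case: b => [[] []]; case: c => [[] []];
  rewrite /Phi3 /Phi /=; ring.
Qed.

Lemma GHZ_diag3 (C : numClosedFieldType) : GHZ C = diag3 (T:=bool) (sqrtC 2)^-1.
Proof. by []. Qed.

Theorem theorem1 (C : numClosedFieldType) :
  slocc (tpow3 (GHZ C) 17) (tpow3 (Phi3 C) 6).
Proof.
rewrite GHZ_diag3 tpow3_diag3 Phi3_strassen tpow3_triad_sum.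
apply: slocc_diag3_triad_sum.
  by rewrite expf_neq0 // invr_eq0 sqrtC_eq0 pnatr_eq0.
by rewrite !card_ffun !card_ord card_bool.
Qed.
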